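(* Let $j\ge2$, let $H$ be a graph, and let $G\cong\mathsf{TS}_j(H)$ with $q=\omega(G)\ge j+2$. Suppose every vertex of $G$ lies in exactly $t$ maximum cliques of $G$ (cliques of size $q$). Then $j$ divides $t$.
   Context: All graphs are finite, simple, undirected; $\omega(G)$ is the clique number. A $k$-clique of a graph $H$ is a set of $k$ pairwise adjacent vertices. For a graph $H$ and integer $k\ge1$, the Token Sliding graph $\mathsf{TS}_k(H)$ has as vertices the $k$-cliques of $H$, and two $k$-cliques $A,B$ are adjacent iff $A\setminus B=\{u\}$, $B\setminus A=\{v\}$ for some vertices $u,v$ with $uv\in E(H)$. *)

From mathcomp Require Import all_boot.
Set Implicit Arguments. Unset Strict Implicit. Unset Printing Implicit Defensive.

Section Defs.
Variable T : finType.
Implicit Types (e : rel T) (S : {set T}).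

Definition simple_graph e := symmetric e /\ irreflexive e.

Definition is_clique e S : bool :=
  [forall x in S, forall y in S, (x != y) ==> e x y].

Definition is_kclique e k S : bool := is_clique e S && (#|S| == k).

Definition clique_number e : nat := \max_(S : {set T} | is_clique e S) #|S|.

Definition max_cliques_at e v : {set {set T}} :=
  [set S : {set T} | is_kclique e (clique_number e) S & v \in S].
End Defs.

Definition TS_vertex (V : finType) (eH : rel V) (k : nat) :=
  {A : {set V} | is_kclique eH k A}.

Definition ts_adj (V : finType) (eH : rel V) (A B : {set V}) : bool :=
  [exists u : V, exists v : V,
     [&& A :\: B == [set u], B :\: A == [set v] & eH u v]].

Definition iso_to_TS (T V : finType) (eG : rel T) (eH : rel V) (k : nat) : Prop :=
  exists f : T -> TS_vertex eH k,
    bijective f /\ forall x y, eG x y = ts_adj eH (val (f x)) (val (f y)).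

From mathcomp Require Import all_boot zify.
Set Implicit Arguments. Unset Strict Implicit. Unset Printing Implicit Defensive.

(* A vertex [v] of [G] is a [j]-clique [A] of [H].  A clique of [TS_j(H)] with at
   least [j + 2] vertices is a star: all its vertices contain a common
   [(j-1)]-set [K].  So a maximum clique through [v] is determined by the token
   [a] of [A] with [K = A :\ a] and by the union [U] of its vertices, a clique of
   [H] of size [omega(G) + j - 1] containing [A]; conversely every such pair
   [(a, U)] yields the maximum clique [{B | A :\ a <= B <= U}].  Hence [v] lies
   in [j] times as many maximum cliques as there are such [U]. *)

Section Cliques.
Variables (T : finType) (e : rel T).
Implicit Types S C : {set T}.

Lemma cliqueP S x y : is_clique e S -> x \in S -> y \in S -> x != y -> e x y.
Proof. by move=> /forall_inP/(_ x) cS xS yS; move: (cS xS) => /forall_inP/(_ y yS)/implyP. Qed.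

Lemma clique_subset S C : is_clique e C -> S \subset C -> is_clique e S.
Proof.
move=> cC sSC; apply/forall_inP=> x xS; apply/forall_inP=> y yS; apply/implyP.
exact: cliqueP cC (subsetP sSC x xS) (subsetP sSC y yS).
Qed.

Lemma card_clique_le S : is_clique e S -> #|S| <= clique_number e.
Proof. exact: (leq_bigmax_cond (F := fun S => #|S|)). Qed.

Lemma clique_number_le_card : clique_number e <= #|T|.
Proof. by apply/bigmax_leqP => S _; apply: max_card. Qed.

Lemma maximum_clique_eq S C :
  is_clique e C -> S \subset C -> #|S| = clique_number e -> S = C.
Proof. by move=> cC sSC cardS; apply/eqP; rewrite eqEcard sSC cardS card_clique_le. Qed.

End Cliques.

Section TokenSliding.
Variables (V : finType) (e : rel V).
Implicit Types A B C K : {set V}.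

Lemma ts_adj_diff_eq A B u w : ts_adj e A B -> u \in A :\: B -> w \in A :\: B -> u = w.
Proof. by case/existsP=> a /existsP[b /and3P[/eqP-> _ _]]; rewrite !inE => /eqP-> /eqP->. Qed.

Lemma ts_adj_edge A B u w : ts_adj e A B -> u \in A :\: B -> w \in B :\: A -> e u w.
Proof.
case/existsP=> a /existsP[b /and3P[/eqP-> /eqP-> eab]].
by rewrite !inE => /eqP-> /eqP->.
Qed.

Lemma ts_adj_cardU A B : ts_adj e A B -> #|A :|: B| = #|A|.+1.
Proof.
case/existsP=> a /existsP[b /and3P[_ /eqP dBA _]].
have := cardsUI A B; have := cardsID A B; rewrite setIC dBA cards1; lia.
Qed.

Lemma ts_adj_setU1 K u w :
  u \notin K -> w \notin K -> u != w -> e u w -> ts_adj e (u |: K) (w |: K).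
Proof.
move=> uK wK neq_uw euw; apply/existsP; exists u; apply/existsP; exists w.
rewrite euw andbT; apply/andP; split; apply/eqP/setP=> z; rewrite !inE.
- case: (eqVneq z u) => [->|_]; first by rewrite (negPf uK) (negPf neq_uw).
  by case: (z \in K); rewrite /= ?orbT ?andbF.
- case: (eqVneq z w) => [->|_]; first by rewrite (negPf wK) eq_sym (negPf neq_uw).
  by case: (z \in K); rewrite /= ?orbT ?andbF.
Qed.

Lemma ts_adj_triangle A B C k :
  ts_adj e A B -> ts_adj e A C -> ts_adj e B C -> #|C| = #|A| ->
  k \in A :&: B -> k \notin C -> C = (A :|: B) :\ k.
Proof.
move=> adjAB adjAC adjBC cardC /setIP[kA kB] kC; apply/esym/eqP.
have : #|A :|: B| = (k \in A :|: B) + #|(A :|: B) :\ k| by apply: cardsD1.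
rewrite (ts_adj_cardU adjAB) inE kA add1n => -[cardD]; rewrite eqEcard cardC cardD leqnn andbT.
apply/subsetP=> u; rewrite !inE => /andP[nuk uAB]; apply/negPn/negP=> uC.
case/orP: uAB => [uA|uB].
- by move: nuk; rewrite (ts_adj_diff_eq adjAC (u := u) (w := k)) ?inE ?uA ?kA ?uC ?kC ?eqxx.
- by move: nuk; rewrite (ts_adj_diff_eq adjBC (u := u) (w := k)) ?inE ?uB ?kB ?uC ?kC ?eqxx.
Qed.

End TokenSliding.

Section TokenSlidingRealization.
Variables (V T : finType) (eH : rel V) (eG : rel T) (m : nat) (g : T -> {set V}).
Hypotheses (g_clique : forall x, is_clique eH (g x)) (card_g : forall x, #|g x| = m.+1)
  (g_inj : injective g)
  (g_onto : forall X, is_clique eH X -> #|X| = m.+1 -> exists x, g x = X)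
  (g_adj : forall x y, eG x y = ts_adj eH (g x) (g y)).

Lemma g_petal (K : {set V}) x :
  K \subset g x -> #|K| = m -> exists2 u, u \notin K & g x = u |: K.
Proof.
move=> sKx cardK; have /cards1P[u duK] : #|g x :\: K| == 1.
  by rewrite cardsDS // card_g cardK subSnn.
have /setDP[ux uK] : u \in g x :\: K by rewrite duK set11.
exists u => //; apply/esym/eqP.
by rewrite eqEcard subUset sub1set ux sKx cardsU1 uK card_g cardK /= add1n.
Qed.

Lemma g_setU1 (U K : {set V}) u :
  is_clique eH U -> K \subset U -> #|K| = m -> u \in U :\: K -> exists x, g x = u |: K.
Proof.
move=> cU sKU cardK /setDP[uU uK]; apply: g_onto; last by rewrite cardsU1 uK cardK.
by apply: clique_subset cU _; rewrite subUset sub1set uU.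
Qed.

Lemma bigcup_clique (S : {set T}) : is_clique eG S -> is_clique eH (\bigcup_(x in S) g x).
Proof.
move=> cS; apply/forall_inP=> u /bigcupP[y yS uy]; apply/forall_inP=> w /bigcupP[z zS wz].
apply/implyP=> neq_uw; case uz: (u \in g z); first exact: cliqueP (g_clique z) uz wz neq_uw.
case wy: (w \in g y); first exact: cliqueP (g_clique y) uy wy neq_uw.
have neq_yz : y != z by apply: contraFneq uz => <-.
apply: (ts_adj_edge (A := g y) (B := g z)); first by rewrite -g_adj (cliqueP cS).
- by rewrite !inE uz uy.
- by rewrite !inE wy wz.
Qed.

Lemma g_subset_inj x y : g x \subset g y -> x = y.
Proof. by move=> sxy; apply/g_inj/eqP; rewrite eqEcard sxy !card_g leqnn. Qed.

Definition star (K U : {set V}) : {set T} := [set x | K \subset g x & g x \subset U].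

Section Star.
Variables (K U : {set V}).
Hypotheses (cU : is_clique eH U) (cardK : #|K| = m).

Lemma star_clique : is_clique eG (star K U).
Proof.
apply/forall_inP=> x; rewrite inE => /andP[sKx sxU].
apply/forall_inP=> y; rewrite inE => /andP[sKy syU]; apply/implyP=> neq_xy.
have [u uK gx] := g_petal sKx cardK; have [w wK gy] := g_petal sKy cardK.
have neq_uw : u != w by apply: contraNneq neq_xy => eq_uw; apply/eqP/g_inj; rewrite gx gy eq_uw.
rewrite g_adj gx gy ts_adj_setU1 // (cliqueP cU) //.
- by apply: (subsetP sxU); rewrite gx setU11.
- by apply: (subsetP syU); rewrite gy setU11.
Qed.

Hypothesis sKU : K \subset U.

Lemma card_star : #|star K U| = #|U :\: K|.
Proof.
rewrite -(card_imset _ g_inj).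
have -> : g @: star K U = (fun u => u |: K) @: (U :\: K).
  apply/setP=> X; apply/imsetP/imsetP => [[x]|[u uUK ->]].
    rewrite inE => /andP[sKx sxU] ->; have [u uK gx] := g_petal sKx cardK.
    by exists u; rewrite // inE uK (subsetP sxU) // gx setU11.
  have [x gx] := g_setU1 cU sKU cardK uUK; move/setDP: uUK => [uU _].
  by exists x; rewrite // inE gx subsetUr subUset sub1set uU.
apply: card_in_imset => u w /setDP[_ uK] _ eq_uwK.
by move: (setU11 u K); rewrite eq_uwK in_setU1 (negPf uK) orbF => /eqP.
Qed.

Lemma star_subset (U' : {set V}) : K \subset U' -> star K U \subset star K U' -> U \subset U'.
Proof.
move=> sKU' sUU'; apply/subsetP=> u uU.
case uK: (u \in K); first exact: (subsetP sKU').
have [x gx] : exists x, g x = u |: K by apply: (g_setU1 cU sKU cardK); rewrite inE uK.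
have : x \in star K U' by apply: (subsetP sUU'); rewrite inE gx subsetUr subUset sub1set uU.
by rewrite inE gx => /andP[_ /subsetP]; apply; apply: setU11.
Qed.

End Star.

Lemma card_le_draws (S : {set T}) (U : {set V}) :
  (forall x, x \in S -> g x \subset U) -> #|S| <= 'C(#|U|, m.+1).
Proof.
move=> sSU; rewrite -(card_imset S g_inj) -cards_draws; apply: subset_leq_card.
by apply/subsetP=> _ /imsetP[x xS ->]; rewrite inE sSU // card_g; apply/eqP.
Qed.

Section CliqueOfTS.
Variable S : {set T}.
Hypothesis cS : is_clique eG S.

Lemma clique_ts_adj x y : x \in S -> y \in S -> x != y -> ts_adj eH (g x) (g y).
Proof. by move=> xS yS neq_xy; rewrite -g_adj (cliqueP cS). Qed.

(* Each [g x] missing a token of [g v :&: g y] is [g v :|: g y] minus that token;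
   each other [g x] differs from [g z] only inside [g v :&: g y]. *)
Lemma clique_subset_union v y z k :
  v \in S -> y \in S -> z \in S -> v != y -> k \in g v :&: g y -> k \notin g z ->
  forall x, x \in S -> g x \subset g v :|: g y.
Proof.
move=> vS yS zS neq_vy kK kz.
have adj_vy := clique_ts_adj vS yS neq_vy.
have missing_core x k' :
    x \in S -> k' \in g v :&: g y -> k' \notin g x -> g x = (g v :|: g y) :\ k'.
  move=> xS /[dup] k'K /setIP[k'v k'y] k'x.
  have neq_vx : v != x by apply: contraNneq k'x => <-.
  have neq_yx : y != x by apply: contraNneq k'x => <-.
  apply: ts_adj_triangle adj_vy (clique_ts_adj vS xS neq_vx) (clique_ts_adj yS xS neq_yx) _ k'K k'x.
  by rewrite !card_g.
move=> x xS; case: (boolP (g v :&: g y \subset g x)) => [sKx|/subsetPn[k' k'K k'x]]; last first.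
  by rewrite (missing_core x k') // subD1set.
apply/subsetP=> u ux; case: (boolP (u \in g v :&: g y)) => [/setIP[uv _]|uK].
  by rewrite inE uv.
suff : u \in g z by rewrite (missing_core z k) // => /setD1P[].
apply/negPn/negP=> uz.
have kx : k \in g x := subsetP sKx k kK.
have neq_xz : x != z by apply: contraNneq kz => <-.
have eq_uk := ts_adj_diff_eq (clique_ts_adj xS zS neq_xz) (u := u) (w := k).
by move: uK; rewrite eq_uk ?kK // inE ?ux ?uz ?kx ?kz.
Qed.

(* The bound is sharp: the [m.+2] subsets of size [m.+1] of a clique of size
   [m.+2] of [H] form a clique of [G] without a common core. *)
Lemma sunflower : m.+3 <= #|S| ->
  exists2 K : {set V}, #|K| = m & forall x, x \in S -> K \subset g x.
Proof.
move=> cardS; have /card_gt1P[v [y [vS yS neq_vy]]] : 1 < #|S| by lia.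
have adj_vy := clique_ts_adj vS yS neq_vy.
have cardU := ts_adj_cardU adj_vy.
exists (g v :&: g y); first by have := cardsUI (g v) (g y); rewrite cardU !card_g; lia.
move=> z zS; apply/subsetP=> k kK; apply/negPn/negP=> kz.
have := card_le_draws (clique_subset_union vS yS zS neq_vy kK kz).
by rewrite cardU card_g binSn; lia.
Qed.

End CliqueOfTS.

Hypothesis clique_number_ge : m.+3 <= clique_number eG.

Definition extensions (A : {set V}) : {set {set V}} :=
  [set U | [&& is_clique eH U, A \subset U & #|U| == clique_number eG + m]].

Section AtVertex.
Variable v : T.

Definition star_at (p : V * {set V}) := star (g v :\ p.1) p.2.

Lemma card_gD1 a : a \in g v -> #|g v :\ a| = m.
Proof. by move=> av; have := cardsD1 a (g v); rewrite av card_g add1n => -[]. Qed.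

Lemma star_at_max_clique p :
  p \in setX (g v) (extensions (g v)) -> star_at p \in max_cliques_at eG v.
Proof.
case: p => a U; rewrite !inE /= => /andP[av /and3P[cU svU /eqP cardU]].
have sKU : g v :\ a \subset U := subset_trans (subD1set _ _) svU.
rewrite /star_at /= subD1set svU /is_kclique star_clique ?card_gD1 //=.
by rewrite andbT card_star ?card_gD1 // cardsDS // cardU card_gD1 // addnK.
Qed.

Lemma star_at_sub1 a b U U' :
  a != b -> star (g v :\ a) U = star (g v :\ b) U' -> star (g v :\ a) U \subset [set v].
Proof.
move=> neq_ab eq_star; apply/subsetP=> x xS; rewrite inE; apply/eqP/esym/g_subset_inj.
move: (xS); rewrite {1}eq_star !inE => /andP[sKbx _]; move: xS; rewrite inE => /andP[sKax _].
apply/subsetP=> u uv; case: (eqVneq u a) => [eq_ua | neq_ua].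
- by apply: (subsetP sKbx); rewrite !inE uv eq_ua neq_ab.
- by apply: (subsetP sKax); rewrite !inE neq_ua.
Qed.

Lemma star_at_inj : {in setX (g v) (extensions (g v)) &, injective star_at}.
Proof.
move=> [a U] [b U'] pE p'E; have := star_at_max_clique pE.
move: pE p'E; rewrite !inE /= => /andP[av /and3P[cU svU _]] /andP[_ /and3P[cU' svU' _]].
rewrite /star_at /= => /andP[/andP[_ /eqP cardS] _] eq_star.
case: (eqVneq a b) => [eq_ab | neq_ab]; last first.
  by have := subset_leq_card (star_at_sub1 neq_ab eq_star); rewrite cards1 cardS; lia.
subst b; have sKU := subset_trans (subD1set (g v) a) svU.
have sKU' := subset_trans (subD1set (g v) a) svU'.
congr pair; apply/eqP; rewrite eqEsubset.
rewrite (star_subset cU (card_gD1 av) sKU sKU') ?eq_star //.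
by rewrite (star_subset cU' (card_gD1 av) sKU' sKU) ?eq_star.
Qed.

Lemma max_clique_star_at S :
  S \in max_cliques_at eG v -> exists2 p, p \in setX (g v) (extensions (g v)) & S = star_at p.
Proof.
rewrite !inE => /andP[/andP[cS /eqP cardS] vS].
have [K cardK sKS] := sunflower cS (leq_trans clique_number_ge (eq_leq (esym cardS))).
have [a aK gv] := g_petal (sKS v vS) cardK.
have eqK : K = g v :\ a by rewrite gv setU1K.
pose U := \bigcup_(x in S) g x.
have cU : is_clique eH U := bigcup_clique cS.
have sSU x : x \in S -> g x \subset U by move=> xS; apply: bigcup_sup.
have sKU : K \subset U := subset_trans (sKS v vS) (sSU v vS).
have eqS : S = star K U.
  apply: maximum_clique_eq (star_clique cU cardK) _ cardS.
  by apply/subsetP=> x xS; rewrite inE sKS ?sSU.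
have cardU : #|U| = clique_number eG + m.
  have := card_star cU cardK sKU; rewrite -eqS cardS cardsDS // cardK.
  by have := subset_leq_card sKU; rewrite cardK; lia.
exists (a, U); last by rewrite /star_at -eqK.
by rewrite !inE /= gv setU11 cU -gv sSU // cardU /=; apply/eqP.
Qed.

Lemma card_max_cliques_at : #|max_cliques_at eG v| = m.+1 * #|extensions (g v)|.
Proof.
have -> : max_cliques_at eG v = star_at @: setX (g v) (extensions (g v)).
  apply/setP=> S; apply/idP/imsetP => [/max_clique_star_at//|[p pE ->]].
  exact: star_at_max_clique.
by rewrite (card_in_imset star_at_inj) cardsX card_g.
Qed.

End AtVertex.

Lemma dvdn_regular_max_cliques t :
  (forall v, #|max_cliques_at eG v| = t) -> m.+1 %| t.
Proof.
move=> regular; have /card_gt0P[v _] : 0 < #|T|.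
  by have := clique_number_le_card eG; lia.
by rewrite -(regular v) card_max_cliques_at dvdn_mulr.
Qed.

End TokenSlidingRealization.

Theorem proposition3p13 (V : finType) (eH : rel V) (T : finType) (eG : rel T)
    (j t : nat) :
  2 <= j ->
  simple_graph eH ->
  simple_graph eG ->
  iso_to_TS eG eH j ->
  j + 2 <= clique_number eG ->
  (forall v : T, #|max_cliques_at eG v| = t) ->
  j %| t.
Proof.
case: j => [//|m] _ _ _ [f [f_bij f_adj]] q_ge regular.
pose g x := val (f x).
have g_kclique x : is_kclique eH m.+1 (g x) := valP (f x).
apply: (dvdn_regular_max_cliques (g := g)) regular => //.
- by move=> x; case/andP: (g_kclique x).
- by move=> x; case/andP: (g_kclique x) => _ /eqP.
- by move=> x y /val_inj/(bij_inj f_bij).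
- move=> X cX cardX; have [f' _ f_f'] := f_bij.
  have kX : is_kclique eH m.+1 X by rewrite /is_kclique cX cardX eqxx.
  by exists (f' (exist _ X kX)); rewrite /g f_f'.
- by rewrite -addn2.
Qed.
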